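(* Let $\Gamma$ be a MaxSAT instance encoded with blocking variables $b_1,\dots,b_m$, with $\mathrm{cost}(\Gamma)=k$, and suppose $\Gamma$ contains the unit clauses $b_{i_1},\dots,b_{i_k}$. Then there is a cost-PR calculus derivation from $\Gamma$ of the unit clause $\lnot b_j$ for each $j\notin\{i_1,\dots,i_k\}$, using $O(km)$ steps.
   Context: Substitutions map variables to $0$, $1$ or literals; a partial assignment has $\sigma(x)\in\{0,1,x\}$; $(\sigma\circ\tau)(x)=\sigma(\tau(x))$; total means all variables assigned. $C{\upharpoonright}_\sigma$: apply $\sigma$ to the literals and simplify; $\Gamma{\upharpoonright}_\sigma$ is the multiset of $C{\upharpoonright}_\sigma\ne1$, $C\in\Gamma$. $\lnot C$ is the partial assignment falsifying all literals of $C$. $\Gamma\vdash_1 C$ means unit propagation on $\Gamma{\upharpoonright}_{\lnot C}$ derives the empty clause; $\Gamma\vdash_1\Delta$ means this for all $D\in\Delta$. $\mathrm{cost}(\alpha)=\sum_i\alpha(b_i)$ for total $\alpha$; $\mathrm{cost}(\Gamma)=\min\{\mathrm{cost}(\alpha):\alpha\models\Gamma\}$. $C$ is cost-PR w.r.t. $\Gamma$ if there is a partial assignment $\sigma$ with (1) $\Gamma{\upharpoonright}_{\lnot C}\vdash_1(\Gamma\cup\{C\}){\upharpoonright}_\sigma$ and (2) $\mathrm{cost}(\tau\circ\sigma)\le\mathrm{cost}(\tau)$ for all total $\tau\supseteq\lnot C$. A cost-PR calculus derivation from $\Gamma$: sequence $D_1,\dots,D_t$, each in $\Gamma$, or by weakening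 or resolution from earlier clauses, or cost-PR w.r.t. $\Gamma\cup\{D_1,\dots,D_{i-1}\}$ with $\mathrm{Var}(D_i)\subseteq\mathrm{Var}(\Gamma)$. *)

From mathcomp Require Import all_boot.
Set Implicit Arguments. Unset Strict Implicit. Unset Printing Implicit Defensive.

(* Variables are natural numbers; a literal (x, p) is x if p = true, ~x if p = false. *)
Definition var := nat.
Definition lit := (var * bool)%type.
Definition clause := seq lit.
(* A formula is a multiset of clauses, represented as a list. *)
Definition cnf := seq clause.

(* Partial assignment: sigma x = Some b  (x |-> b), None  (x |-> x). *)
Definition passign := var -> option bool.
Definition tassign := var -> bool.

Definition lit_val (s : passign) (l : lit) : option bool :=
  if s l.1 is Some v then Some (v == l.2) else None.

Definition clause_sat (s : passign) (C : clause) : bool :=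
  has (fun l => lit_val s l == Some true) C.

(* C|_sigma when C is not satisfied: remove the falsified literals *)
Definition clause_restr (s : passign) (C : clause) : clause :=
  [seq l <- C | lit_val s l != Some false].

Definition restr (s : passign) (F : cnf) : cnf :=
  [seq clause_restr s C | C <- F & ~~ clause_sat s C].

Definition negcl (C : clause) : passign := fun x =>
  if (x, true) \in C then Some false
  else if (x, false) \in C then Some true else None.

Definition lit_asg (l : lit) : passign := fun y =>
  if y == l.1 then Some l.2 else None.

Inductive up_ref : cnf -> Prop :=
  | up_empty F : [::] \in F -> up_ref F
  | up_unit F l : [:: l] \in F -> up_ref (restr (lit_asg l) F) -> up_ref F.

Definition derives1 (F : cnf) (C : clause) : Prop := up_ref (restr (negcl C) F).
Definition derives1_all (F D : cnf) : Prop := forall C, C \in D -> derives1 F C.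

Definition extends (t : tassign) (s : passign) : Prop :=
  forall x v, s x = Some v -> t x = v.

Definition comp (t : tassign) (s : passign) : tassign := fun x =>
  if s x is Some v then v else t x.

Definition cost (m : nat) (b : 'I_m -> var) (t : tassign) : nat :=
  \sum_(i < m) t (b i).

Definition models (t : tassign) (F : cnf) : Prop :=
  forall C, C \in F -> has (fun l => t l.1 == l.2) C.

Definition cost_is (m : nat) (b : 'I_m -> var) (F : cnf) (k : nat) : Prop :=
  (exists a, models a F /\ cost b a = k) /\
  (forall a, models a F -> k <= cost b a).

Definition cost_PR (m : nat) (b : 'I_m -> var) (F : cnf) (C : clause) : Prop :=
  exists s : passign,
    derives1_all (restr (negcl C) F) (restr s (C :: F)) /\
    (forall t, extends t (negcl C) -> cost b (comp t s) <= cost b t).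

Definition in_vars (F : cnf) (x : var) : Prop :=
  exists C p, C \in F /\ (x, p) \in C.

(* one derivation step: D may be added given the original formula G and the
   previously derived clauses prev *)
Definition step (m : nat) (b : 'I_m -> var) (G prev : cnf) (D : clause) : Prop :=
  D \in G
  \/ (exists C, C \in prev /\ {subset C <= D})
  \/ (exists C1 C2 x, C1 \in prev /\ C2 \in prev /\
        (x, true) \in C1 /\ (x, false) \in C2 /\
        D =i [seq l <- C1 | l != (x, true)] ++ [seq l <- C2 | l != (x, false)])
  \/ (cost_PR b (G ++ prev) D /\ forall x p, (x, p) \in D -> in_vars G x).

Definition derivation (m : nat) (b : 'I_m -> var) (G : cnf) (ds : seq clause) : Prop :=
  forall i, i < size ds -> step b G (take i ds) (nth [::] ds i).

Definition blocking_encoded (m : nat) (b : 'I_m -> var) (G : cnf) : Prop :=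
  injective b /\ forall i, in_vars G (b i).

From mathcomp Require Import all_boot.
Set Implicit Arguments. Unset Strict Implicit. Unset Printing Implicit Defensive.

(* Fix an optimal model a. Since it satisfies the units b_i (i in I) and has
   cost k = #|I|, it sets b_j to 0 for every j outside I. For such j the clause
   ~b_j \/ \/_(i in I) ~b_i is cost-PR with witness a itself: a satisfies every
   clause derived so far, and every assignment falsifying the clause has cost
   at least k. Resolving it against the k units b_i yields ~b_j, so the whole
   derivation has k + (k + 1) * (m - k) clauses. *)

Definition neg_clause (xs : seq var) : clause := [seq (x, false) | x <- xs].

Fixpoint unit_resolvents (x : var) (ys : seq var) : seq clause :=
  if ys is _ :: ys' then neg_clause (x :: ys') :: unit_resolvents x ys' else [::].

Definition elim_block (x : var) (ys : seq var) : seq clause :=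
  neg_clause (x :: ys) :: unit_resolvents x ys.

Lemma size_unit_resolvents x ys : size (unit_resolvents x ys) = size ys.
Proof. by elim: ys => //= y ys ->. Qed.

Lemma size_flatten_elim_block xs ys :
  size (flatten [seq elim_block x ys | x <- xs]) = size xs * (size ys).+1.
Proof.
by elim: xs => //= x xs IH; rewrite size_cat IH size_unit_resolvents mulSn addSn.
Qed.

Lemma unit_mem_elim_block x ys : [:: (x, false)] \in elim_block x ys.
Proof.
rewrite /elim_block; elim: ys => [|y ys IH]; first by rewrite mem_head.
by rewrite /= in_cons IH orbT.
Qed.

Lemma head_mem_elim_block x ys C : C \in elim_block x ys -> (x, false) \in C.
Proof.
rewrite /elim_block; elim: ys => [|y ys IH] /=.
  by rewrite mem_seq1 => /eqP ->; rewrite mem_head.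
by rewrite !in_cons => /orP [/eqP -> | /IH]; rewrite ?mem_head.
Qed.

Lemma negcl_neg_clause xs y : y \in xs -> negcl (neg_clause xs) y = Some true.
Proof.
move=> yxs; rewrite /negcl.
have -> : ((y, true) \in neg_clause xs) = false by apply/mapP => -[? _ []].
by rewrite (map_f (fun x => (x, false)) yxs).
Qed.

Lemma filter_neg_clause x y ys :
  x != y -> y \notin ys ->
  [seq l <- neg_clause (x :: y :: ys) | l != (y, false)] = neg_clause (x :: ys).
Proof.
move=> xy yys; rewrite /neg_clause filter_map /= /preim /= !xpair_eqE !andbT xy eqxx /=.
congr (_ :: map _ _); apply/all_filterP/allP => z zys /=.
by rewrite xpair_eqE andbT; apply: contraNneq yys => <-.
Qed.

Lemma restr_model (a : tassign) F : models a F -> restr (fun x => Some (a x)) F = [::].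
Proof.
move=> aF; rewrite /restr (@eq_in_filter _ _ pred0) ?filter_pred0 // => C /aF.
by move=> aC; apply/negbF; apply: sub_has aC => l; rewrite /lit_val => ->.
Qed.

Lemma cost_ge_card m (b : 'I_m -> var) (t : tassign) (A : {set 'I_m}) :
  (forall i, i \in A -> t (b i)) -> #|A| <= cost b t.
Proof.
move=> At; rewrite /cost -sum1_card [X in _ <= X](bigID [in A]) /=.
by apply: leq_trans (leq_addr _ _); apply: leq_sum => i /At ->.
Qed.

Lemma cost_le_card_false m (b : 'I_m -> var) (t : tassign) (A : {set 'I_m}) j :
  (forall i, i \in A -> t (b i)) -> cost b t <= #|A| -> j \notin A -> t (b j) = false.
Proof.
move=> At cost_t jA; apply/negbTE/negP => tj.
have : #|j |: A| <= cost b t by apply: cost_ge_card => i /setU1P [-> | /At].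
by rewrite cardsU1 jA add1n ltnNge cost_t.
Qed.

(* A total model as witness makes the restricted formula empty, so condition (1) is vacuous. *)
Lemma cost_PR_of_model m (b : 'I_m -> var) F C (a : tassign) :
  models a (C :: F) -> (forall t, extends t (negcl C) -> cost b a <= cost b t) ->
  cost_PR b F C.
Proof. by move=> aCF a_min; exists (fun x => Some (a x)); rewrite restr_model. Qed.

Section Derivations.

Variables (m : nat) (b : 'I_m -> var) (G : cnf).

Definition derivation_from (prev ds : seq clause) : Prop :=
  forall i, i < size ds -> step b G (prev ++ take i ds) (nth [::] ds i).

Lemma derivation_from_cat prev ds es :
  derivation_from prev ds -> derivation_from (prev ++ ds) es ->
  derivation_from prev (ds ++ es).
Proof.
move=> Hds Hes i; rewrite size_cat nth_cat take_cat => lt_i.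
case: ltnP => [lt_ds_i|le_ds_i]; first exact: Hds.
rewrite catA; apply: Hes.
by rewrite -(ltn_add2l (size ds)) subnKC.
Qed.

Lemma derivation_from_cons prev C ds :
  step b G prev C -> derivation_from (rcons prev C) ds -> derivation_from prev (C :: ds).
Proof.
move=> HC Hds; apply: (@derivation_from_cat _ [:: C]); last by rewrite cats1.
by case=> // _; rewrite cats0.
Qed.

Lemma derivation_from_mem prev ds : all [in G] ds -> derivation_from prev ds.
Proof. by move=> /allP dsG i lt_i; left; apply/dsG/mem_nth. Qed.

Lemma step_unit_resolution prev x C :
  [:: (x, true)] \in prev -> C \in prev -> (x, false) \in C ->
  step b G prev [seq l <- C | l != (x, false)].
Proof.
move=> unit_x Cprev xC; right; right; left.
exists [:: (x, true)], C, x; do !split => //; first exact: mem_head.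
by move=> l; rewrite /= eqxx.
Qed.

Lemma derivation_from_unit_resolvents prev x ys :
  uniq (x :: ys) -> neg_clause (x :: ys) \in prev ->
  (forall y, y \in ys -> [:: (y, true)] \in prev) ->
  derivation_from prev (unit_resolvents x ys).
Proof.
elim: ys prev => [|y ys IH] prev // /and3P [+ yys uys] Cprev units.
rewrite in_cons negb_or => /andP [xy xys].
apply: derivation_from_cons.
  rewrite -(filter_neg_clause xy yys); apply: step_unit_resolution => //.
  - by apply: units; rewrite mem_head.
  - by rewrite /= in_cons mem_head orbT.
apply: IH.
- by rewrite /= xys.
- by rewrite mem_rcons mem_head.
- by move=> z zys; rewrite mem_rcons in_cons units ?orbT // in_cons zys orbT.
Qed.

End Derivations.

Section EliminationBlocks.

Variables (m : nat) (b : 'I_m -> var) (G : cnf) (a : tassign) (ys : seq var).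
Hypotheses (a_min : forall t : tassign, (forall y, y \in ys -> t y) -> cost b a <= cost b t)
           (uniq_ys : uniq ys) (ys_vars : forall y, y \in ys -> in_vars G y).

Lemma derivation_from_elim_blocks prev xs :
  models a (G ++ prev) -> (forall y, y \in ys -> [:: (y, true)] \in prev) ->
  (forall x, x \in xs -> [/\ a x = false, x \notin ys & in_vars G x]) ->
  derivation_from b G prev (flatten [seq elim_block x ys | x <- xs]).
Proof.
elim: xs prev => [|x xs IH] prev a_prev units xs_ok; first by move=> i; rewrite ltn0.
have [ax xys x_var] := xs_ok x (mem_head _ _).
apply: (derivation_from_cat (ds := elim_block x ys)).
  apply: derivation_from_cons.
    right; right; right; split.
      apply: (@cost_PR_of_model _ _ _ _ a).
        by move=> C; rewrite in_cons => /orP [/eqP -> | /a_prev] //=; rewrite ax.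
      move=> t t_ext; apply: a_min => y yys; apply: t_ext.
      by apply: negcl_neg_clause; rewrite in_cons yys orbT.
    by move=> z p /mapP [y + [-> _]]; rewrite in_cons => /orP [/eqP -> | /ys_vars].
  apply: derivation_from_unit_resolvents; first by rewrite /= xys.
    by rewrite mem_rcons mem_head.
  by move=> y /units; rewrite mem_rcons in_cons => ->; rewrite orbT.
apply: IH.
- move=> C; rewrite catA mem_cat => /orP [/a_prev // | /head_mem_elim_block xC].
  by apply/hasP; exists (x, false) => //=; rewrite ax.
- by move=> y /units; rewrite mem_cat => ->.
- by move=> z zxs; apply: xs_ok; rewrite in_cons zxs orbT.
Qed.

End EliminationBlocks.

Section BlockingVariables.

Variables (m : nat) (b : 'I_m -> var) (I : {set 'I_m}).

Definition blocking_units : seq clause := [seq [:: (b i, true)] | i <- enum I].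

Definition blocking_elims : seq clause :=
  flatten [seq elim_block x [seq b i | i <- enum I] | x <- [seq b j | j <- enum (~: I)]].

Lemma size_blocking_units : size blocking_units = #|I|.
Proof. by rewrite size_map -cardE. Qed.

Lemma size_blocking_elims : size blocking_elims = #|~: I| * #|I|.+1.
Proof. by rewrite size_flatten_elim_block !size_map -!cardE. Qed.

Lemma unit_mem_blocking_elims j : j \notin I -> [:: (b j, false)] \in blocking_elims.
Proof.
move=> jI; apply/flatten_mapP; exists (b j); last exact: unit_mem_elim_block.
by apply: map_f; rewrite mem_enum inE.
Qed.

Variable G : cnf.

Lemma derivation_blocking_units :
  (forall i, i \in I -> [:: (b i, true)] \in G) -> derivation_from b G [::] blocking_units.
Proof.
move=> units_I; apply: derivation_from_mem; apply/allP => _ /mapP [i iI ->].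
by apply: units_I; rewrite -mem_enum.
Qed.

Lemma derivation_blocking_elims (a : tassign) :
  blocking_encoded b G -> models a G -> (forall i, i \in I -> a (b i)) ->
  cost b a = #|I| -> derivation_from b G blocking_units blocking_elims.
Proof.
move=> [inj_b b_vars] aG a_I cost_a.
apply: (@derivation_from_elim_blocks _ _ _ a).
- move=> t t_I; rewrite cost_a; apply: cost_ge_card => i iI.
  by apply: t_I; apply: map_f; rewrite mem_enum.
- by rewrite map_inj_uniq ?enum_uniq.
- by move=> _ /mapP [i _ ->].
- move=> C; rewrite mem_cat => /orP [/aG // | /mapP [i iI ->]].
  by rewrite /= a_I // -mem_enum.
- by move=> _ /mapP [i iI ->]; apply: map_f.
- move=> x /mapP [j]; rewrite mem_enum inE => jI ->; split => //.
    by apply: (cost_le_card_false a_I _ jI); rewrite cost_a.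
  by apply/mapP => -[i]; rewrite mem_enum => iI /inj_b eq_ji; rewrite eq_ji iI in jI.
Qed.

End BlockingVariables.

Theorem lemma4p1 :
  exists c : nat,
  forall (m : nat) (b : 'I_m -> var) (G : cnf) (k : nat) (I : {set 'I_m}),
    blocking_encoded b G ->
    cost_is b G k ->
    #|I| = k ->
    (forall i, i \in I -> [:: (b i, true)] \in G) ->
    exists ds : seq clause,
      derivation b G ds /\
      (forall j, j \notin I -> [:: (b j, false)] \in ds) /\
      size ds <= c * (k.+1 * m).
Proof.
exists 2 => m b G k I encG [[a [aG cost_a]] _] card_I units_I.
have a_I i : i \in I -> a (b i) by move=> /units_I /aG /= /orP [/eqP -> |].
rewrite -{}card_I in cost_a *.
exists (blocking_units b I ++ blocking_elims b I); split.
  apply: derivation_from_cat (derivation_blocking_units units_I) _.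
  exact: derivation_blocking_elims encG aG a_I cost_a.
split; first by move=> j jI; rewrite mem_cat unit_mem_blocking_elims ?orbT.
have le_I_m : #|I| <= m by rewrite -[leqRHS](card_ord m) max_card.
have le_notI_m : #|~: I| <= m by rewrite -[leqRHS](card_ord m) max_card.
rewrite size_cat size_blocking_units size_blocking_elims mul2n -addnn leq_add //.
  exact: leq_trans le_I_m (leq_pmull _ _).
by rewrite mulnC leq_mul2l le_notI_m orbT.
Qed.
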